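(* Let $f:(M,g_M)\to(N,g_N)$ be a conformal Riemannian morphism between Riemannian manifolds with $\dim M=m$, $\dim N=n$, and Riemannian factor $\wedge_f$. Then for every $x\in M$, $$\wedge_f(x)\,\mathrm{rank}(df_x)\le\|df_x\|_F^2,$$ where $\|T\|_F=\sqrt{\mathrm{trace}(T^{*}T)}$ denotes the Frobenius norm of a linear map $T$ between inner-product spaces.
   Context: A linear map $T:V\to W$ between real inner-product spaces is a geometric function if there exist a subspace $C\subset V$ with $V=\ker T\oplus C$ and $r>0$ with $\langle T u,T v\rangle=r\langle u,v\rangle$ for all $u,v\in C$ ($r$ is a conformality factor). A smooth $f:(M,g_M)\to(N,g_N)$ is a conformal Riemannian morphism if there is a smooth $\wedge_f:M\to\mathbb{R}^{+}$, the Riemannian factor, such that each $df_x$ is a geometric function with conformality factor $\wedge_f(x)$. The Frobenius norm of $df_x$ is taken with respect to $g_M(x)$ and $g_N(f(x))$. *)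

From HB Require Import structures.
From mathcomp Require Import all_boot all_order all_algebra.
From mathcomp Require Import reals.
Set Implicit Arguments. Unset Strict Implicit. Unset Printing Implicit Defensive.
Import Order.TTheory GRing.Theory Num.Theory.
Local Open Scope ring_scope.

(* Finite-dimensional real inner-product spaces are modelled in coordinates:
   vectors are row vectors 'rV[R]_m, an inner product is given by its Gram
   matrix G (symmetric, positive definite): <u,v>_G = u G v^T.
   A linear map T : R^m -> R^n is u |-> u *m A with A : 'M_(m,n). *)

Definition ip (R : realType) (m : nat) (G : 'M[R]_m) (u v : 'rV[R]_m) : R :=
  (u *m G *m v^T) 0 0.

Definition gram_pd (R : realType) (m : nat) (G : 'M[R]_m) : Prop :=
  G^T = G /\ forall u : 'rV[R]_m, u != 0 -> 0 < ip G u u.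

Definition geometric_with (R : realType) (m n : nat)
  (GM : 'M[R]_m) (GN : 'M[R]_n) (A : 'M[R]_(m, n)) (r : R) : Prop :=
  0 < r /\
  exists C : 'M[R]_m,
    (kermx A :&: C == (0 : 'M[R]_m))%MS /\ (kermx A + C == (1%:M : 'M[R]_m))%MS /\
    forall u v : 'rV[R]_m, (u <= C)%MS -> (v <= C)%MS ->
      ip GN (u *m A) (v *m A) = r * ip GM u v.

(* Adjoint of T w.r.t. the inner products GM, GN : the matrix Astar with
   <u A, w>_GN = <u, w Astar>_GM ; explicitly Astar = GN A^T GM^{-1}. *)
Definition adjoint (R : realType) (m n : nat)
  (GM : 'M[R]_m) (GN : 'M[R]_n) (A : 'M[R]_(m, n)) : 'M[R]_(n, m) :=
  GN *m A^T *m invmx GM.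

Definition frob2 (R : realType) (m n : nat)
  (GM : 'M[R]_m) (GN : 'M[R]_n) (A : 'M[R]_(m, n)) : R :=
  \tr (A *m adjoint GM GN A).

From HB Require Import structures.
From mathcomp Require Import all_boot all_order all_algebra.
From mathcomp Require Import reals.
From mathcomp Require Import zify lra.
Set Implicit Arguments. Unset Strict Implicit. Unset Printing Implicit Defensive.
Import Order.TTheory GRing.Theory Num.Theory.
Local Open Scope ring_scope.

(* Let P be the projection onto the conformal complement C along ker df.  On C,
   df multiplies inner products by Lam, so ||df||_F^2 = Lam ||P||_F^2, and
   rank P = rank df.  For an idempotent P with adjoint Q, expanding
   ||P - Q||_F^2 = tr ((P - Q) (Q - P)) gives 2 (||P||_F^2 - tr P) >= 0,
   and tr P = rank P. *)

Lemma mxtrace_idem (F : fieldType) (n : nat) (P : 'M[F]_n) :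
  P *m P = P -> \tr P = (\rank P)%:R.
Proof.
move=> PP; set X := col_base P; set Y := row_base P.
have XY : X *m Y = P by exact: mulmx_base.
have YX : Y *m X = 1%:M.
  apply: (row_full_inj (col_base_full P)); apply: (row_free_inj (row_base_free P)).
  by rewrite (mulmxA X Y X) XY -(mulmxA P X Y) XY PP mulmx1 XY.
by rewrite -{1}XY mxtrace_mulC YX mxtrace1.
Qed.

Section ProjectionAlongKernel.

Variables (F : fieldType) (m n : nat) (A : 'M[F]_(m, n)) (C : 'M[F]_m).
Hypotheses (capKC : (kermx A :&: C == (0 : 'M[F]_m))%MS)
  (sumKC : (kermx A + C == (1%:M : 'M[F]_m))%MS).

Let P := proj_mx C (kermx A).

Let capCK : (C :&: kermx A = 0)%MS.
Proof. by rewrite capmxC; apply/eqmx0P. Qed.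

Lemma proj_ker_sub : (P <= C)%MS.
Proof. by rewrite -[P]mul1mx proj_mx_sub. Qed.

Lemma proj_ker_idem : P *m P = P.
Proof. exact: proj_mx_proj. Qed.

Lemma proj_ker_mul : P *m A = A.
Proof.
have sub1 : (1%:M <= C + kermx A)%MS by rewrite addsmxC (eqmxP sumKC).
have /sub_kermxP := proj_mx_compl_sub sub1.
by rewrite mul1mx mulmxBl mul1mx => /eqP; rewrite subr_eq0 => /eqP.
Qed.

Lemma mxrank_proj_ker : \rank P = \rank A.
Proof.
have CP : (C <= P)%MS.
  by rewrite -[X in (X <= _)%MS](proj_mx_id capCK (submx_refl C)) submxMl.
have -> : \rank P = \rank C by apply/eqP; rewrite eqn_leq !mxrankS ?proj_ker_sub.
have := mxrank_sum_cap (kermx A) C.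
rewrite (eqmx_rank sumKC) (eqmx0P capKC) mxrank1 mxrank0 mxrank_ker.
by have := rank_leq_row A; lia.
Qed.

End ProjectionAlongKernel.

Lemma ip_row_entry (R : realType) (p q k : nat)
    (X : 'M[R]_(p, k)) (G : 'M[R]_k) (Y : 'M[R]_(q, k)) i j :
  (X *m G *m Y^T) i j = ip G (row i X) (row j Y).
Proof.
by rewrite /ip -row_mul tr_row !mxE; apply: eq_bigr => l _; rewrite !mxE.
Qed.

Section GramMatrix.

Variables (R : realType) (m : nat) (G : 'M[R]_m).
Hypothesis G_pd : gram_pd G.

Let G_sym : G^T = G. Proof. by case: G_pd. Qed.
Let G_pos (u : 'rV[R]_m) : u != 0 -> 0 < ip G u u.
Proof. by case: G_pd => _; apply. Qed.

Lemma gram_orthonormal_rows k : (k <= m)%N ->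
  exists E : 'M[R]_(k, m), E *m G *m E^T = 1%:M.
Proof.
elim: k => [|k IH] lt_km; first by exists 0; apply/matrixP => -[].
have [E EGE] := IH (ltnW lt_km).
have [i /negP notinE] : exists i, ~~ (row i 1%:M <= E)%MS.
  apply/row_subPn; apply: contraL lt_km => /mxrankS.
  by rewrite mxrank1 -leqNgt => /leq_trans; apply; exact: rank_leq_row.
set v := row i 1%:M in notinE.
set w := v - v *m G *m E^T *m E.
have wGE : w *m G *m E^T = 0.
  rewrite /w !mulmxBl.
  have -> : v *m G *m E^T *m E *m G *m E^T = v *m G *m E^T *m (E *m G *m E^T).
    by rewrite !mulmxA.
  by rewrite EGE mulmx1 subrr.
have w_neq0 : w != 0.
  apply/eqP => w0; apply: notinE.
  have -> : v = v *m G *m E^T *m E by apply/eqP; rewrite -subr_eq0 -/w w0.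
  exact: submxMl.
set s := Num.sqrt (ip G w w).
have s_gt0 : 0 < s by rewrite sqrtr_gt0 G_pos.
set u := s^-1 *: w.
have uGu : u *m G *m u^T = 1%:M.
  rewrite [LHS]mx11_scalar /u linearZ /= -!scalemxAl -scalemxAr scalerA mxE.
  by rewrite -/(ip G w w) -expr2 exprVn sqr_sqrtr ?ltW ?G_pos // mulVf ?gt_eqF ?G_pos.
have uGE : u *m G *m E^T = 0 by rewrite /u -!scalemxAl wGE scaler0.
have EGu : E *m G *m u^T = 0.
  by rewrite -[E]trmxK -G_sym -!trmx_mul mulmxA uGE trmx0.
exists (col_mx u E : 'M_(1 + k, m)).
rewrite (tr_col_mx u E) (mul_col_mx u E G) (mul_col_row (u *m G) (E *m G) u^T E^T).
rewrite uGu uGE EGu EGE.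
exact: (esym (scalar_mx_block 1 k 1)).
Qed.

Lemma gram_invmx_factor : G \in unitmx /\ exists E : 'M[R]_m, invmx G = E^T *m E.
Proof.
have [E EGE] := @gram_orthonormal_rows m (leqnn m).
have [E_unit _] : E \in unitmx /\ G *m E^T \in unitmx.
  by apply: mulmx1_unit; rewrite mulmxA.
have GEE : G *m (E^T *m E) = 1%:M.
  apply: (can_inj (mulKmx E_unit)); by rewrite mulmx1 !mulmxA EGE mul1mx.
have [G_unit _] := mulmx1_unit GEE.
split=> //; exists E.
by rewrite -[LHS]mulmx1 -GEE (mulmxA (invmx G)) mulVmx // mul1mx.
Qed.

Lemma gram_unitmx : G \in unitmx.
Proof. by case: gram_invmx_factor. Qed.

Local Notation adj := (adjoint G G).

Lemma adjointK (Z : 'M[R]_m) : adj (adj Z) = Z.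
Proof.
rewrite /adjoint !trmx_mul trmx_inv trmxK G_sym !mulmxA mulmxV ?gram_unitmx //.
by rewrite mul1mx -mulmxA mulmxV ?gram_unitmx // mulmx1.
Qed.

Lemma adjointM (X Y : 'M[R]_m) : adj (X *m Y) = adj Y *m adj X.
Proof.
rewrite /adjoint trmx_mul !mulmxA -(mulmxA _ (invmx G) G) mulVmx ?gram_unitmx //.
by rewrite mulmx1.
Qed.

Lemma adjointB (X Y : 'M[R]_m) : adj (X - Y) = adj X - adj Y.
Proof. by rewrite /adjoint linearB /= mulmxBr mulmxBl. Qed.

Lemma mxtrace_adjoint (Z : 'M[R]_m) : \tr (adj Z) = \tr Z.
Proof.
by rewrite /adjoint mxtrace_mulC mulmxA mulVmx ?gram_unitmx // mul1mx mxtrace_tr.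
Qed.

Lemma frob2_ge0 (Z : 'M[R]_m) : 0 <= frob2 G G Z.
Proof.
rewrite /frob2 /adjoint; have [_ [E ->]] := gram_invmx_factor.
(* tr (Z G Z^T E^T E) is the sum of the squared G-norms of the rows of E Z *)
rewrite !mulmxA mxtrace_mulC !mulmxA -(mulmxA _ Z^T) -trmx_mul.
apply: sumr_ge0 => i _; rewrite ip_row_entry.
have [->|nz] := eqVneq (row i (E *m Z)) 0; last exact/ltW/G_pos.
by rewrite /ip !mul0mx mxE.
Qed.

Lemma rank_le_frob2_idem (P : 'M[R]_m) :
  P *m P = P -> (\rank P)%:R <= frob2 G G P.
Proof.
move=> PP; rewrite -mxtrace_idem //.
have PsPs : adj P *m adj P = adj P by rewrite -adjointM PP.
have := frob2_ge0 (P - adj P).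
rewrite /frob2 adjointB adjointK !(mulmxBl, mulmxBr) !linearB /= PP PsPs.
rewrite mxtrace_adjoint [\tr (adj P *m P)]mxtrace_mulC.
lra.
Qed.

End GramMatrix.

Lemma frob2_geometric (R : realType) (m n : nat)
    (GM : 'M[R]_m) (GN : 'M[R]_n) (A : 'M[R]_(m, n)) (r : R) :
  gram_pd GM -> geometric_with GM GN A r -> r * (\rank A)%:R <= frob2 GM GN A.
Proof.
move=> GM_pd [r_gt0 [C [capKC [sumKC confC]]]].
set P := proj_mx C (kermx A).
have PA : P *m A = A := proj_ker_mul sumKC.
have PC : (P <= C)%MS := proj_ker_sub A C.
have AGA : A *m GN *m A^T = r *: (P *m GM *m P^T).
  apply/matrixP => i j; rewrite -{1}PA -{2}PA [RHS]mxE !ip_row_entry.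
  rewrite (row_mul i P A) (row_mul j P A).
  by rewrite confC // (submx_trans (row_sub _ _) PC).
have -> : frob2 GM GN A = r * frob2 GM GM P.
  by rewrite /frob2 /adjoint !mulmxA AGA -scalemxAl mxtraceZ.
rewrite ler_pM2l // -(mxrank_proj_ker capKC sumKC).
exact: rank_le_frob2_idem (proj_ker_idem capKC).
Qed.

Theorem mainTheorem13 (R : realType) (m n : nat) (M N : Type)
  (gM : M -> 'M[R]_m) (gN : N -> 'M[R]_n)
  (f : M -> N) (df : M -> 'M[R]_(m, n)) (Lam : M -> R)
  (hgM : forall x, gram_pd (gM x)) (hgN : forall y, gram_pd (gN y))
  (hLam : forall x, 0 < Lam x)
  (hconf : forall x, geometric_with (gM x) (gN (f x)) (df x) (Lam x)) :
  forall x : M,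
    Lam x * (\rank (df x))%:R <= frob2 (gM x) (gN (f x)) (df x).
Proof. by move=> x; apply: frob2_geometric. Qed.
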